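(* Let $K$ be a skew field, $V$ a left (topological) $K$-vector space with basis $v^0,v^1,\ldots$, $V'$ the dual right $K$-vector space with basis $p_0,p_1,\ldots$, with pairing $(\cdot,\cdot)$, and assume $D=(y_i^k)$, $y_i^k=(v^k,p_i)$, is generic. For $\mathbf f\in V$, $\mathbf g\in V'$ put $f_i=(\mathbf f,p_i)$, $g^k=(v^k,\mathbf g)$ and, for $n\ge0$, $$R_n(\mathbf f,\mathbf g)=(\mathbf f,\mathbf g)-\sum_{i,k=0}^n f_i(z_k^i)_n g^k .$$ Then $$(\mathbf f,\mathbf g)=\sum_{m=0}^n\Delta_R^m f\;|D_m|_m^m\;\Delta_L^m g+R_n(\mathbf f,\mathbf g),$$ and $R_n(\mathbf f,p_i)=R_n(v^k,\mathbf g)=0$ for all $\mathbf f\in V$, $\mathbf g\in V'$ and $0\le i,k\le n$.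
   Context: The pairing $(\cdot,\cdot):V\times V'\to K$ is biadditive with $(\lambda v,p\mu)=\lambda(v,p)\mu$. $D_m$ is the $(m+1)\times(m+1)$ matrix with entry $y_i^k$ in row $k$, column $i$ ($0\le i,k\le m$), and $(z_k^i)_n$ is the entry in row $i$, column $k$ of $D_n^{-1}$. Quasideterminants: for a square matrix $M$ with rows/columns indexed by $\{0,\ldots,n\}$ and entry $M_a^b$ in row $b$, column $a$, $|M|_a^b=M_a^b-r\,(M^{(b,a)})^{-1}c$, where $M^{(b,a)}$ deletes row $b$ and column $a$, $r$ is row $b$ without its column-$a$ entry and $c$ is column $a$ without its row-$b$ entry ($|M|_0^0=M_0^0$ for $1\times1$ matrices). Difference derivatives: let $A=(a_m^i)$ (upper triangular, $a_m^i=0$ for $i>m$) and $C=(c_k^m)$ (lower triangular, $c_k^m=0$ for $k>m$) be the unique matrices such that $q_m=\sum_{i=0}^m p_ia_m^i$ and $w^m=\sum_{k=0}^m c_k^m v^k$ satisfy $(w^m,q_{m'})=0$ for $m\ne m'$ and $(w^m,p_m)=(v^m,q_m)=1$. Then $\Delta_R^m f=(\mathbf f,q_m)=\sum_{i=0}^m f_ia_m^i$ and $\Delta_L^m g=(w^m,\mathbf g)=\sum_{k=0}^m c_k^m g^k$. Genericity means all $D_m$ and all quasideterminants appearing are invertible. *)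

From HB Require Import structures.
From mathcomp Require Import all_boot all_algebra.
From Stdlib Require Import ClassicalEpsilon.
Set Implicit Arguments. Unset Strict Implicit. Unset Printing Implicit Defensive.
Import GRing.Theory.
Local Open Scope ring_scope.

Definition skew_field (K : unitRingType) : Prop :=
  forall x : K, x != 0 -> x \is a GRing.unit.

Definition mx_inverse (R : pzRingType) (n : nat) (A B : 'M[R]_n) : Prop :=
  A *m B = 1%:M /\ B *m A = 1%:M.

Definition ncunitmx (R : pzRingType) (n : nat) (A : 'M[R]_n) : Prop :=
  exists B, mx_inverse A B.

(* The inverse (when it exists; an arbitrary matrix otherwise). *)
Definition ncinvmx (R : pzRingType) (n : nat) (A : 'M[R]_n) : 'M[R]_n :=
  epsilon (inhabits 0) (mx_inverse A).

(* Quasideterminant |M|_a^b (M_a^b = M b a is the entry in row b, column a):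
   M_a^b - r (M^{(b,a)})^{-1} c. For 1x1 matrices the correction term is an
   empty sum, so |M|_0^0 = M_0^0. *)
Definition qdet (R : pzRingType) (m : nat) (M : 'M[R]_m.+1) (a b : 'I_m.+1) : R :=
  M b a - (row b (col' a M) *m ncinvmx (row' b (col' a M)) *m col a (row' b M)) 0 0.

Definition Dmx (R : pzRingType) (y : nat -> nat -> R) (m : nat) : 'M[R]_m.+1 :=
  \matrix_(k < m.+1, i < m.+1) y i k.

Definition generic (R : pzRingType) (y : nat -> nat -> R) : Prop :=
  forall m : nat, ncunitmx (Dmx y m) /\ qdet (Dmx y m) ord_max ord_max != 0.

(* Bordering D_m by its last row and column, the corner entry of D_{m+1}^{-1} is
   inverse to the Schur complement, which is the quasideterminant
   |D_{m+1}|_{m+1}^{m+1}, and the leading block of D_{m+1}^{-1} differs from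
   D_m^{-1} by the rank-one term (last column) |D_{m+1}|_{m+1}^{m+1} (last row).
   Biorthogonality and triangularity force the coefficients of q_m and w^m to be
   the last column and the last row of D_m^{-1}, so these rank-one corrections
   telescope sum_{i,k} f_i (z_k^i)_n g^k into sum_m Delta_R^m f |D_m|_m^m Delta_L^m g.
   The remainder vanishes on the p_i and v^k because D_n^{-1} is a two-sided
   inverse.  Each right-handed statement is its left-handed twin in the converse
   ring K^c. *)

From HB Require Import structures.
From mathcomp Require Import all_boot all_algebra.
From Stdlib Require Import ClassicalEpsilon.
Set Implicit Arguments. Unset Strict Implicit. Unset Printing Implicit Defensive.
Import GRing.Theory.
Local Open Scope ring_scope.

Lemma sum_ord_deltal (R : pzRingType) n j (F : nat -> R) :
  \sum_(i < n) (j == i :> nat)%:R * F i = if (j < n)%N then F j else 0.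
Proof.
case: ltnP => [ltjn | lenj].
  rewrite (bigD1 (Ordinal ltjn)) //= eqxx mul1r big1 ?addr0 // => i.
  by rewrite -val_eqE eq_sym /= => /negbTE ->; rewrite mul0r.
by rewrite big1 // => i _; rewrite gtn_eqF ?mul0r // (leq_trans (ltn_ord i)).
Qed.

Lemma sum_ord_deltar (R : pzRingType) n l (F : nat -> R) :
  \sum_(k < n) F k * (k == l :> nat)%:R = if (l < n)%N then F l else 0.
Proof.
case: ltnP => [ltln | lenl].
  rewrite (bigD1 (Ordinal ltln)) //= eqxx mulr1 big1 ?addr0 // => k.
  by rewrite -val_eqE /= => /negbTE ->; rewrite mulr0.
by rewrite big1 // => k _; rewrite ltn_eqF ?mulr0 // (leq_trans (ltn_ord k)).
Qed.

Definition is_block_inv (R : pzRingType) (y Z : nat -> nat -> R) (n : nat) : Prop :=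
  forall j l, (j < n)%N -> (l < n)%N ->
    \sum_(k < n) Z j k * y l k = (j == l)%:R /\ \sum_(k < n) y k j * Z k l = (j == l)%:R.

Definition schur_compl (R : pzRingType) (y Z : nat -> nat -> R) (n : nat) : R :=
  y n n - \sum_(j < n) \sum_(k < n) y j n * Z j k * y n k.

Lemma is_block_inv_tr (R : pzRingType) (y Z : nat -> nat -> R) n :
  is_block_inv y Z n -> @is_block_inv R^c (fun i k => y k i) (fun i k => Z k i) n.
Proof. by move=> Zinv j l hj hl; have [ZD DZ] := Zinv l j hl hj; rewrite eq_sym. Qed.

Lemma schur_compl_tr (R : pzRingType) (y Z : nat -> nat -> R) n :
  @schur_compl R^c (fun i k => y k i) (fun i k => Z k i) n = schur_compl y Z n.
Proof.
rewrite /schur_compl exchange_big; congr (_ - _); apply: eq_bigr => j _.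
by apply: eq_bigr => k _; exact: (esym (mulrA _ _ _)).
Qed.

Lemma bordered_inv_row (R : pzRingType) (y Z' Z : nat -> nat -> R) n j l :
  is_block_inv y Z' n -> is_block_inv y Z n.+1 -> (j <= n)%N -> (l < n)%N ->
  Z j l + Z j n * (\sum_(i < n) y i n * Z' i l) = if (j < n)%N then Z' j l else 0.
Proof.
move=> Z'inv Zinv hj hl; rewrite -(sum_ord_deltal n j (Z'^~ l)).
under [RHS]eq_bigr => i _ do rewrite -(Zinv j i hj (leqW (ltn_ord i))).1 mulr_suml.
rewrite exchange_big big_ord_recr /= mulr_sumr; congr (_ + _); last first.
  by apply: eq_bigr => i _; rewrite mulrA.
transitivity (\sum_(k < n) Z j k * (k == l :> nat)%:R); first by rewrite sum_ord_deltar hl.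
apply: eq_bigr => k _.
by rewrite -(Z'inv k l (ltn_ord k) hl).2 mulr_sumr; apply: eq_bigr => i _; rewrite mulrA.
Qed.

Lemma bordered_inv_col (R : pzRingType) (y Z' Z : nat -> nat -> R) n j l :
  is_block_inv y Z' n -> is_block_inv y Z n.+1 -> (j < n)%N -> (l <= n)%N ->
  Z j l + (\sum_(i < n) Z' j i * y n i) * Z n l = if (l < n)%N then Z' j l else 0.
Proof.
by move=> /is_block_inv_tr Z'inv /is_block_inv_tr Zinv hj hl;
  exact: (bordered_inv_row Z'inv Zinv hl hj).
Qed.

Lemma schur_compl_mul_corner (R : pzRingType) (y Z' Z : nat -> nat -> R) n :
  is_block_inv y Z' n -> is_block_inv y Z n.+1 -> schur_compl y Z' n * Z n n = 1.
Proof.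
move=> Z'inv Zinv.
have := (Zinv n n (ltnSn n) (ltnSn n)).2; rewrite eqxx mulr1n big_ord_recr /= => <-.
rewrite /schur_compl mulrBl addrC mulr_suml -sumrN; congr (_ + _).
apply: eq_bigr => j _.
have := bordered_inv_col Z'inv Zinv (ltn_ord j) (leqnn n).
rewrite ltnn => /eqP; rewrite addr_eq0 => /eqP ->.
rewrite mulrN mulrA mulr_sumr; congr (- (_ * _)).
by apply: eq_bigr => k _; rewrite mulrA.
Qed.

Lemma corner_mul_schur_compl (R : pzRingType) (y Z' Z : nat -> nat -> R) n :
  is_block_inv y Z' n -> is_block_inv y Z n.+1 -> Z n n * schur_compl y Z' n = 1.
Proof.
move=> /is_block_inv_tr Z'inv /is_block_inv_tr Zinv.
by have := schur_compl_mul_corner Z'inv Zinv; rewrite schur_compl_tr.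
Qed.

Lemma bordered_inv_update (R : pzRingType) (y Z' Z : nat -> nat -> R) n j l :
  is_block_inv y Z' n -> is_block_inv y Z n.+1 -> (j <= n)%N -> (l <= n)%N ->
  Z j l = (if (j < n)%N && (l < n)%N then Z' j l else 0)
          + Z j n * schur_compl y Z' n * Z n l.
Proof.
move=> Z'inv Zinv hj; rewrite leq_eqVlt => /predU1P[-> | hl].
  by rewrite ltnn andbF add0r -mulrA schur_compl_mul_corner ?mulr1.
have := bordered_inv_row Z'inv Zinv (leqnn n) hl; rewrite ltnn => /eqP.
rewrite addr_eq0 => /eqP ->; rewrite hl andbT -(bordered_inv_row Z'inv Zinv hj hl).
by rewrite mulrN !mulrA -(mulrA _ _ (Z n n)) schur_compl_mul_corner // mulr1 addrK.
Qed.

Lemma ncinvmxP (R : pzRingType) n (A : 'M[R]_n) : ncunitmx A -> mx_inverse A (ncinvmx A).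
Proof. by move=> [B AB]; apply: epsilon_spec; exists B. Qed.

Lemma lower_trig_eq0 (R : pzRingType) (c : nat -> nat -> R) (u : nat -> R) m :
  (forall k, (k < m)%N -> \sum_(j < k.+1) c k j * u j = 0) ->
  (forall k, (k < m)%N -> GRing.lreg (c k k)) ->
  forall k, (k < m)%N -> u k = 0.
Proof.
move=> Hcu Hreg; elim/ltn_ind=> k IH hk; apply: (Hreg k hk); rewrite mulr0.
have := Hcu k hk; rewrite big_ord_recr /= big1 ?add0r // => j _.
by rewrite IH ?mulr0 // (ltn_trans _ hk).
Qed.

Lemma upper_trig_eq0 (R : pzRingType) (a : nat -> nat -> R) (t : nat -> R) m :
  (forall i, (i < m)%N -> \sum_(j < i.+1) t j * a i j = 0) ->
  (forall i, (i < m)%N -> GRing.rreg (a i i)) ->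
  forall i, (i < m)%N -> t i = 0.
Proof. exact: (@lower_trig_eq0 R^c). Qed.

Section DmxInverse.
Variables (R : pzRingType) (y : nat -> nat -> R).
Hypothesis Dmx_unit : forall m, ncunitmx (Dmx y m).

Definition Dinv m (i k : nat) : R := ncinvmx (Dmx y m) (inord i) (inord k).

Lemma Dinv_ord m (i k : 'I_m.+1) : ncinvmx (Dmx y m) i k = Dinv m i k.
Proof. by rewrite /Dinv !inord_val. Qed.

Lemma Dinv_block_inv m : is_block_inv y (Dinv m) m.+1.
Proof.
have [DZ ZD] := ncinvmxP (Dmx_unit m); move=> j l hj hl; split.
  transitivity ((ncinvmx (Dmx y m) *m Dmx y m) (inord j) (inord l)).
    by rewrite mxE; apply: eq_bigr => k _; rewrite /Dinv inord_val [Dmx y m _ _]mxE inordK.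
  by rewrite ZD mxE -val_eqE /= !inordK.
transitivity ((Dmx y m *m ncinvmx (Dmx y m)) (inord j) (inord l)).
  by rewrite mxE; apply: eq_bigr => k _; rewrite /Dinv inord_val [Dmx y m _ _]mxE inordK.
by rewrite DZ mxE -val_eqE /= !inordK.
Qed.

(* For [m = 0] the block is empty: this lets the bordering lemmas cover D_0 too. *)
Lemma Dinv_pred_block_inv m : is_block_inv y (Dinv m.-1) m.
Proof. by case: m => [// | m]; apply: Dinv_block_inv. Qed.

Lemma qdet_Dmx m : qdet (Dmx y m) ord_max ord_max = schur_compl y (Dinv m.-1) m.
Proof.
rewrite /qdet /schur_compl !mxE; congr (_ - _); case: m => [|m].
  by rewrite !big_ord0.
have -> : row' ord_max (col' ord_max (Dmx y m.+1)) = Dmx y m.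
  by apply/matrixP => i j; rewrite !mxE !lift_max.
rewrite exchange_big; apply: eq_bigr => k _; rewrite mxE mulr_suml.
by apply: eq_bigr => j _; rewrite !mxE Dinv_ord !lift_max; reflexivity.
Qed.

Lemma qdet_Dmx_mulDinv m : qdet (Dmx y m) ord_max ord_max * Dinv m m m = 1.
Proof.
by rewrite qdet_Dmx (schur_compl_mul_corner (@Dinv_pred_block_inv m) (@Dinv_block_inv m)).
Qed.

Lemma Dinv_mul_qdet_Dmx m : Dinv m m m * qdet (Dmx y m) ord_max ord_max = 1.
Proof.
by rewrite qdet_Dmx (corner_mul_schur_compl (@Dinv_pred_block_inv m) (@Dinv_block_inv m)).
Qed.

Lemma Dinv_recr m j l : (j <= m)%N -> (l <= m)%N ->
  Dinv m j l = (if (j < m)%N && (l < m)%N then Dinv m.-1 j l else 0)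
               + Dinv m j m * qdet (Dmx y m) ord_max ord_max * Dinv m m l.
Proof.
rewrite qdet_Dmx; apply: bordered_inv_update.
  exact: Dinv_pred_block_inv.
exact: Dinv_block_inv.
Qed.

Lemma Dinv_telescope (F G : nat -> R) n :
  \sum_(i < n.+1) \sum_(k < n.+1) F i * ncinvmx (Dmx y n) i k * G k =
  \sum_(m < n.+1) (\sum_(i < m.+1) F i * Dinv m i m) * qdet (Dmx y m) ord_max ord_max
                  * (\sum_(k < m.+1) Dinv m m k * G k).
Proof.
pose term m := (\sum_(i < m.+1) F i * Dinv m i m) * qdet (Dmx y m) ord_max ord_max
                * (\sum_(k < m.+1) Dinv m m k * G k).
suff telescope N :
    \sum_(i < N) \sum_(k < N) F i * Dinv N.-1 i k * G k = \sum_(m < N) term m.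
  by rewrite -telescope; apply: eq_bigr => i _; apply: eq_bigr => k _; rewrite Dinv_ord.
elim: N => [|m IH]; first by rewrite !big_ord0.
rewrite [RHS]big_ord_recr -IH /=.
under eq_bigr => i _ do under eq_bigr => k _ do
  rewrite (Dinv_recr (ltn_ord i : (i <= m)%N) (ltn_ord k : (k <= m)%N)) mulrDr mulrDl.
under eq_bigr => i _ do rewrite big_split.
rewrite big_split /=; congr (_ + _).
  rewrite big_ord_recr /= [X in _ + X]big1 ?addr0 => [|k _]; last by rewrite ltnn mulr0 mul0r.
  apply: eq_bigr => i _; rewrite big_ord_recr /= ltnn andbF mulr0 mul0r addr0.
  by apply: eq_bigr => k _; rewrite !ltn_ord.
rewrite /term !mulr_suml; apply: eq_bigr => i _; rewrite mulr_sumr.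
by apply: eq_bigr => k _; rewrite !mulrA.
Qed.

Lemma Dinv_reproduce_l (F : nat -> R) n l : (l <= n)%N ->
  \sum_(i < n.+1) \sum_(k < n.+1) F i * ncinvmx (Dmx y n) i k * y l k = F l.
Proof.
move=> hl; transitivity (\sum_(i < n.+1) F i * (i == l :> nat)%:R).
  apply: eq_bigr => i _; rewrite -(Dinv_block_inv (ltn_ord i) (hl : (l < n.+1)%N)).1.
  by rewrite mulr_sumr; apply: eq_bigr => k _; rewrite Dinv_ord mulrA.
by rewrite sum_ord_deltar ltnS hl.
Qed.

Lemma Dinv_reproduce_r (G : nat -> R) n l : (l <= n)%N ->
  \sum_(i < n.+1) \sum_(k < n.+1) y i l * ncinvmx (Dmx y n) i k * G k = G l.
Proof.
move=> hl; rewrite exchange_big; transitivity (\sum_(k < n.+1) (l == k :> nat)%:R * G k).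
  apply: eq_bigr => k _; rewrite -(Dinv_block_inv (hl : (l < n.+1)%N) (ltn_ord k)).2.
  by rewrite mulr_suml; apply: eq_bigr => i _; rewrite Dinv_ord.
by rewrite sum_ord_deltal ltnS hl.
Qed.

Lemma Dinv_corner_lreg m : GRing.lreg (Dinv m m m).
Proof.
apply: (@GRing.lregMl _ (qdet (Dmx y m) ord_max ord_max)).
by rewrite qdet_Dmx_mulDinv; apply: lreg1.
Qed.

Lemma Dinv_corner_rreg m : GRing.rreg (Dinv m m m).
Proof.
apply: (@GRing.rregMr _ _ (qdet (Dmx y m) ord_max ord_max)).
by rewrite Dinv_mul_qdet_Dmx; apply: rreg1.
Qed.

Lemma Dinv_solve_col (x : nat -> R) m l : (l <= m)%N ->
  (forall k, (k <= m)%N -> \sum_(i < m.+1) y i k * x i = (k == l)%:R) ->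
  forall i, (i <= m)%N -> x i = Dinv m i l.
Proof.
move=> hl Hx i hi.
transitivity (\sum_(i' < m.+1) (i == i' :> nat)%:R * x i').
  by rewrite sum_ord_deltal ltnS hi.
transitivity (\sum_(k < m.+1) Dinv m i k * (k == l :> nat)%:R).
  2: by rewrite sum_ord_deltar ltnS hl.
under eq_bigr => i' _ do
  rewrite -(Dinv_block_inv (hi : (i < m.+1)%N) (ltn_ord i')).1 mulr_suml.
rewrite exchange_big; apply: eq_bigr => k _; rewrite -(Hx k (ltn_ord k)) mulr_sumr.
by apply: eq_bigr => i' _; rewrite mulrA.
Qed.

Lemma Dinv_solve_row (x : nat -> R) m l : (l <= m)%N ->
  (forall i, (i <= m)%N -> \sum_(k < m.+1) x k * y i k = (l == i)%:R) ->
  forall k, (k <= m)%N -> x k = Dinv m l k.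
Proof.
move=> hl Hx k hk.
transitivity (\sum_(k' < m.+1) x k' * (k' == k :> nat)%:R).
  by rewrite sum_ord_deltar ltnS hk.
transitivity (\sum_(i < m.+1) (l == i :> nat)%:R * Dinv m i k).
  2: by rewrite (sum_ord_deltal _ _ (Dinv m ^~ k)) ltnS hl.
under eq_bigr => k' _ do
  rewrite -(Dinv_block_inv (ltn_ord k') (hk : (k < m.+1)%N)).2 mulr_sumr.
rewrite exchange_big; apply: eq_bigr => i _; rewrite -(Hx i (ltn_ord i)) mulr_suml.
by apply: eq_bigr => k' _; rewrite mulrA.
Qed.

Lemma biorthogonal_coefs (a c : nat -> nat -> R) :
  (forall m m', m <> m' -> \sum_(k < m.+1) \sum_(i < m'.+1) c m k * y i k * a m' i = 0) ->
  (forall m, \sum_(k < m.+1) c m k * y m k = 1) ->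
  (forall m, \sum_(i < m.+1) y i m * a m i = 1) ->
  forall m, (forall i, (i <= m)%N -> a m i = Dinv m i m)
         /\ (forall k, (k <= m)%N -> c m k = Dinv m m k).
Proof.
move=> Hcya Hcy Hya; elim/ltn_ind=> m IH.
have ya0 : forall k, (k < m)%N -> \sum_(i < m.+1) y i k * a m i = 0.
  apply: (@lower_trig_eq0 _ c) => k hk; last first.
    by rewrite ((IH k hk).2 k (leqnn k)); apply: Dinv_corner_lreg.
  have km : k <> m by apply/eqP; rewrite ltn_eqF.
  rewrite -[RHS](Hcya k m km); apply: eq_bigr => j _; rewrite mulr_sumr.
  by apply: eq_bigr => i _; rewrite mulrA.
have cy0 : forall i, (i < m)%N -> \sum_(k < m.+1) c m k * y i k = 0.
  apply: (@upper_trig_eq0 _ a) => i hi; last first.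
    by rewrite ((IH i hi).1 i (leqnn i)); apply: Dinv_corner_rreg.
  have mi : m <> i by apply/eqP; rewrite gtn_eqF.
  rewrite -[RHS](Hcya m i mi) exchange_big; apply: eq_bigr => j _; rewrite mulr_suml.
  by apply: eq_bigr => k _.
split.
  apply: (Dinv_solve_col (leqnn m)) => k.
  by rewrite leq_eqVlt => /predU1P[-> | ltkm]; rewrite ?eqxx ?Hya // ya0 // ltn_eqF.
apply: (Dinv_solve_row (leqnn m)) => i.
by rewrite leq_eqVlt => /predU1P[-> | ltim]; rewrite ?eqxx ?Hcy // cy0 // gtn_eqF.
Qed.

End DmxInverse.

Section Pairing.
Variables (K : pzRingType) (V : lmodType K) (V' : lmodType K^c) (pair : V -> V' -> K).
Hypotheses (pairDl : forall u1 u2 q, pair (u1 + u2) q = pair u1 q + pair u2 q)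
           (pairDr : forall u q1 q2, pair u (q1 + q2) = pair u q1 + pair u q2)
           (pairZ : forall (l : K) u (mu : K^c) q,
                      pair (l *: u) (mu *: q) = l * pair u q * (mu : K)).

Lemma pairZl l u q : pair (l *: u) q = l * pair u q.
Proof. by rewrite -{1}[q]scale1r pairZ; exact: mulr1. Qed.

Lemma pairZr u (mu : K) q : pair u ((mu : K^c) *: q) = pair u q * mu.
Proof. by rewrite -{1}[u]scale1r pairZ mul1r. Qed.

Lemma pair_lincombl n (c : 'I_n -> K) (u : 'I_n -> V) q :
  pair (\sum_(k < n) c k *: u k) q = \sum_(k < n) c k * pair (u k) q.
Proof.
have pair0l : pair 0 q = 0 by rewrite -(scale0r 0) pairZl mul0r.
rewrite (big_morph (pair^~ q) (fun u1 u2 => pairDl u1 u2 q) pair0l).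
by apply: eq_bigr => k _; rewrite pairZl.
Qed.

Lemma pair_lincombr n u (a : 'I_n -> K) (r : 'I_n -> V') :
  pair u (\sum_(i < n) (a i : K^c) *: r i) = \sum_(i < n) pair u (r i) * a i.
Proof.
have pair0r : pair u 0 = 0 by rewrite -(scale0r (0 : V')) pairZr mulr0.
rewrite (big_morph (pair u) (pairDr u) pair0r).
by apply: eq_bigr => i _; rewrite pairZr.
Qed.

End Pairing.

Unset Implicit Arguments.
Theorem theorem7
  (K : unitRingType) (HK : skew_field K)
  (V : lmodType K) (V' : lmodType K^c)
  (pair : V -> V' -> K)
  (pairDl : forall (u1 u2 : V) (q : V'), pair (u1 + u2) q = pair u1 q + pair u2 q)
  (pairDr : forall (u : V) (q1 q2 : V'), pair u (q1 + q2) = pair u q1 + pair u q2)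
  (pairZ : forall (l : K) (u : V) (mu : K^c) (q : V'),
             pair (l *: u) (mu *: q) = l * pair u q * (mu : K))
  (v : nat -> V) (p : nat -> V')
  (Hgen : generic (fun i k => pair (v k) (p i)))
  (a c : nat -> nat -> K)
  (HAC : let q := fun m : nat => \sum_(i < m.+1) ((a m i : K) : K^c) *: p i in
         let w := fun m : nat => \sum_(k < m.+1) c m k *: v k in
         (forall m m' : nat, m <> m' -> pair (w m) (q m') = 0) /\
         (forall m : nat, pair (w m) (p m) = 1) /\
         (forall m : nat, pair (v m) (q m) = 1))
  (n : nat) (f : V) (g : V') :
  let y := fun i k : nat => pair (v k) (p i) in
  let DR := fun (m : nat) (f : V) => \sum_(i < m.+1) pair f (p i) * a m i in
  let DL := fun (m : nat) (g : V') => \sum_(k < m.+1) c m k * pair (v k) g in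
  let Rn := fun (f : V) (g : V') =>
    pair f g - \sum_(i < n.+1) \sum_(k < n.+1)
                 pair f (p i) * ncinvmx (Dmx y n) i k * pair (v k) g in
  pair f g = \sum_(m < n.+1) DR m f * qdet (Dmx y m) ord_max ord_max * DL m g + Rn f g
  /\ (forall i : nat, (i <= n)%N -> Rn f (p i) = 0)
  /\ (forall k : nat, (k <= n)%N -> Rn (v k) g = 0).
Proof.
move=> y DR DL Rn.
have Dunit m : ncunitmx (Dmx y m) by case: (Hgen m).
have [Hwq [Hwp Hvq]] := HAC.
have coefs m : (forall i, (i <= m)%N -> a m i = Dinv y m i m)
               /\ (forall k, (k <= m)%N -> c m k = Dinv y m m k).
  apply: (biorthogonal_coefs Dunit) => [m1 m2 /Hwq wq0 | m1 | m1].
  - rewrite -[RHS]wq0 (pair_lincombl pairDl pairZ); apply: eq_bigr => k _.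
    by rewrite (pair_lincombr pairDr pairZ) mulr_sumr; apply: eq_bigr => i _; rewrite mulrA.
  - by rewrite -(Hwp m1) (pair_lincombl pairDl pairZ).
  - by rewrite -(Hvq m1) (pair_lincombr pairDr pairZ).
have DRE m : DR m f = \sum_(i < m.+1) pair f (p i) * Dinv y m i m.
  by apply: eq_bigr => i _; rewrite ((coefs m).1 i (ltn_ord i)).
have DLE m : DL m g = \sum_(k < m.+1) Dinv y m m k * pair (v k) g.
  by apply: eq_bigr => k _; rewrite ((coefs m).2 k (ltn_ord k)).
split; [|split].
- rewrite /Rn (Dinv_telescope Dunit (fun i => pair f (p i)) (fun k => pair (v k) g)).
  by under eq_bigr => m _ do rewrite DRE DLE; rewrite addrC subrK.
- by move=> i hi; rewrite /Rn (Dinv_reproduce_l Dunit (fun i => pair f (p i)) hi) subrr.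
- by move=> k hk; rewrite /Rn (Dinv_reproduce_r Dunit (fun k => pair (v k) g) hk) subrr.
Qed.
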